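(* Let $\{(a_i,b_i,m_i,n_i)\in(0,\infty)^2\times\mathbb{R}^2 : i\in\mathbb{Z}\}$ be a positive ABMN solution. Then: (1) the solution is strict, i.e. $m_{i+1}>m_i$ and $n_i>n_{i+1}$ for all $i\in\mathbb{Z}$; (2) the limits $m_{-\infty}=\lim_{k\to\infty}m_{-k}$, $m_\infty=\lim_{k\to\infty}m_k$, $n_{-\infty}=\lim_{k\to\infty}n_{-k}$, $n_\infty=\lim_{k\to\infty}n_k$ exist in $\mathbb{R}\cup\{\pm\infty\}$ and satisfy $m_\infty>m_{-\infty}$ and $n_{-\infty}>n_\infty$; (3) these four limits are real numbers; in particular the Mina margin $\frac{n_{-\infty}-n_\infty}{m_\infty-m_{-\infty}}$ is a positive finite real number.
   Context: The ABMN system on $\mathbb{Z}$ is the following set of equations in real variables $a_i,b_i,m_i,n_i$ ($i\in\mathbb{Z}$), with $a_i,b_i\ge 0$ always assumed: for every $i\in\mathbb{Z}$, $(a_i+b_i)(m_i+a_i)=a_im_{i+1}+b_im_{i-1}$; $(a_i+b_i)(n_i+b_i)=a_in_{i+1}+b_in_{i-1}$; $(a_i+b_i)^2=b_i(m_{i+1}-m_{i-1})$; $(a_i+b_i)^2=a_i(n_{i-1}-n_{i+1})$. A solution is positive if $a_i>0$ and $b_i>0$ for all $i$; it is strict if $m_{i+1}>m_i$ and $n_i>n_{i+1}$ for all $i$. Its boundary data is $(m_{-\infty},m_\infty,n_{-\infty},n_\infty)$, the limits $\lim_{k\to\infty}m_{-k}$, $\lim_{k\to\infty}m_k$, $\lim_{k\to\infty}n_{-k}$,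 $\lim_{k\to\infty}n_k$ (when they exist), and its Mina margin is $\frac{n_{-\infty}-n_\infty}{m_\infty-m_{-\infty}}$. *)

From Stdlib Require Import Reals ZArith.
From Coquelicot Require Import Coquelicot.
Open Scope R_scope.

Definition ABMN (a b m n : Z -> R) : Prop :=
  forall i : Z,
    (a i + b i) * (m i + a i) = a i * m (i + 1)%Z + b i * m (i - 1)%Z /\
    (a i + b i) * (n i + b i) = a i * n (i + 1)%Z + b i * n (i - 1)%Z /\
    (a i + b i) ^ 2 = b i * (m (i + 1)%Z - m (i - 1)%Z) /\
    (a i + b i) ^ 2 = a i * (n (i - 1)%Z - n (i + 1)%Z).

Definition positive_sol (a b : Z -> R) : Prop :=
  forall i : Z, 0 < a i /\ 0 < b i.

Definition strict_sol (m n : Z -> R) : Prop :=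
  forall i : Z, m i < m (i + 1)%Z /\ n (i + 1)%Z < n i.

Definition to_minus (x : Z -> R) : nat -> R := fun k => x (- Z.of_nat k)%Z.
Definition to_plus (x : Z -> R) : nat -> R := fun k => x (Z.of_nat k).

Definition mina_margin (mL mR nL nR : R) : R := (nL - nR) / (mR - mL).

(* The ABMN equations solve to
     m_(i+1) - m_i = 2 a_i + b_i,       b_i (m_i - m_(i-1)) = a_i^2,
     n_(i-1) - n_i = a_i + 2 b_i,       a_i (n_i - n_(i+1)) = b_i^2,
   which gives strictness at once. Towards +oo the ratio t_i = a_i / b_i obeys
   t_(i+1) >= t_i + 2 t_i^2, so eventually b_i <= a_i; from then on n_i - 2 b_i
   increases, so n is bounded below. Since m_(i+1) - m_i <= 2 (n_(i-1) - n_i), the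
   sequence m_(i+1) + 2 n_i decreases, so m is bounded above. The reflection
   i |-> -i, (a, b, m, n) |-> (b, a, n, m) preserves positive solutions and turns
   the limits at -oo into limits at +oo. *)
From Stdlib Require Import Reals ZArith Lra Lia Psatz.
From Coquelicot Require Import Coquelicot.
Open Scope R_scope.

Lemma increments_of_balance (a b x y : R) : 0 < a -> 0 < b ->
  a * x - b * y = (a + b) * a -> (a + b) ^ 2 = b * (x + y) ->
  x = 2 * a + b /\ b * y = a ^ 2.
Proof.
  intros ha hb Hbal Hsq.
  assert (Hx : (a + b) * x = (a + b) * (2 * a + b)) by nra.
  apply Rmult_eq_reg_l in Hx; [|lra].
  split; [exact Hx | subst x; nra].
Qed.

Lemma ABMN_increments (a b m n : Z -> R) : positive_sol a b -> ABMN a b m n ->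
  forall i : Z,
    m (i + 1)%Z - m i = 2 * a i + b i /\
    b i * (m i - m (i - 1)%Z) = a i ^ 2 /\
    n (i - 1)%Z - n i = a i + 2 * b i /\
    a i * (n i - n (i + 1)%Z) = b i ^ 2.
Proof.
  intros Hpos Hsol i.
  destruct (Hpos i) as [ha hb]; destruct (Hsol i) as [Em [En [Sm Sn]]].
  destruct (increments_of_balance (a i) (b i)
              (m (i + 1)%Z - m i) (m i - m (i - 1)%Z)) as [Xm Ym];
    [lra | lra | nra | nra |].
  destruct (increments_of_balance (b i) (a i)
              (n (i - 1)%Z - n i) (n i - n (i + 1)%Z)) as [Xn Yn];
    [lra | lra | nra | nra |].
  repeat split; lra.
Qed.

Lemma ABMN_strict (a b m n : Z -> R) :
  positive_sol a b -> ABMN a b m n -> strict_sol m n.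
Proof.
  intros Hpos Hsol i.
  destruct (ABMN_increments a b m n Hpos Hsol i) as [Dm _].
  destruct (ABMN_increments a b m n Hpos Hsol (i + 1)) as [_ [_ [Dn _]]].
  replace (i + 1 - 1)%Z with i in Dn by lia.
  destruct (Hpos i); destruct (Hpos (i + 1)%Z); split; lra.
Qed.

Lemma ABMN_reflect (a b m n : Z -> R) : positive_sol a b -> ABMN a b m n ->
  positive_sol (fun j => b (- j)%Z) (fun j => a (- j)%Z) /\
  ABMN (fun j => b (- j)%Z) (fun j => a (- j)%Z)
       (fun j => n (- j)%Z) (fun j => m (- j)%Z).
Proof.
  intros Hpos Hsol; split.
  - intro j; destruct (Hpos (- j)%Z); split; assumption.
  - intro j.
    replace (- (j + 1))%Z with (- j - 1)%Z by lia.
    replace (- (j - 1))%Z with (- j + 1)%Z by lia.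
    destruct (Hsol (- j)%Z) as [Em [En [Sm Sn]]].
    repeat split; lra.
Qed.

Section PositiveHalfLine.

Variables a b m n : nat -> R.
Hypothesis a_pos : forall k, 0 < a k.
Hypothesis b_pos : forall k, 0 < b k.
Hypothesis m_step : forall k, m (S k) - m k = 2 * a k + b k.
Hypothesis n_step : forall k, n k - n (S k) = a (S k) + 2 * b (S k).
Hypothesis m_step_sq : forall k, b (S k) * (m (S k) - m k) = a (S k) ^ 2.
Hypothesis n_step_sq : forall k, a k * (n k - n (S k)) = b k ^ 2.

Lemma ratio_step k : a k / b k + 2 * (a k / b k) ^ 2 <= a (S k) / b (S k).
Proof.
  pose proof (a_pos k); pose proof (b_pos k).
  pose proof (a_pos (S k)); pose proof (b_pos (S k)).
  pose proof (m_step_sq k) as Em; pose proof (n_step_sq k) as En.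
  rewrite m_step in Em; rewrite n_step in En.
  assert (Gap : a (S k) / b (S k) - (a k / b k + 2 * (a k / b k) ^ 2)
                = 2 * a k * a (S k) / b k ^ 2).
  { field_simplify_eq; [|lra]. nra. }
  assert (0 <= 2 * a k * a (S k) / b k ^ 2)
    by (apply Rdiv_le_0_compat; nra).
  lra.
Qed.

Lemma ratio_linear_growth k :
  a 0%nat / b 0%nat + 2 * INR k * (a 0%nat / b 0%nat) ^ 2 <= a k / b k.
Proof.
  set (t0 := a 0%nat / b 0%nat).
  assert (t0_pos : 0 < t0) by (apply Rdiv_lt_0_compat; auto).
  induction k as [|k IH].
  - change (INR 0) with 0; unfold t0; lra.
  - rewrite S_INR; pose proof (ratio_step k); pose proof (pos_INR k).
    assert (t0 <= a k / b k) by nra.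
    nra.
Qed.

Lemma eventually_b_le_a : exists K, forall k, (K <= k)%nat -> b k <= a k.
Proof.
  set (t0 := a 0%nat / b 0%nat).
  assert (t0_pos : 0 < t0) by (apply Rdiv_lt_0_compat; auto).
  destruct (INR_archimed (2 * t0 ^ 2) 1) as [K HK]; [nra |].
  exists K; intros k Hk; apply le_INR in Hk.
  pose proof (ratio_linear_growth k) as Hgrow; fold t0 in Hgrow.
  pose proof (b_pos k).
  assert (Ht : 1 <= a k / b k) by nra.
  apply Rmult_le_compat_r with (r := b k) in Ht; [|lra].
  unfold Rdiv in Ht; rewrite Rmult_assoc, Rinv_l in Ht; lra.
Qed.

Lemma n_antitone k j : n (k + j)%nat <= n k.
Proof.
  induction j as [|j IH]; [rewrite Nat.add_0_r; lra|].
  rewrite Nat.add_succ_r; pose proof (n_step (k + j)%nat).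
  pose proof (a_pos (S (k + j))); pose proof (b_pos (S (k + j))); lra.
Qed.

Lemma n_bounded_below : exists c, forall k, c <= n k.
Proof.
  destruct eventually_b_le_a as [K HK].
  (* past K, each decrement of n is at most b_k while 2 b_(k+1) <= n_k - n_(k+1) *)
  assert (Hpot : forall j, n K - 2 * b K <= n (K + j)%nat - 2 * b (K + j)%nat).
  { induction j as [|j IH]; [rewrite Nat.add_0_r; lra|].
    rewrite Nat.add_succ_r; set (k := (K + j)%nat) in *.
    pose proof (HK k ltac:(lia)); pose proof (n_step k); pose proof (n_step_sq k).
    pose proof (a_pos k); pose proof (b_pos k); pose proof (a_pos (S k)).
    assert (n k - n (S k) <= b k) by nra.
    lra. }
  exists (n K - 2 * b K); intro k.
  pose proof (n_antitone k K) as Hmono; rewrite Nat.add_comm in Hmono.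
  pose proof (Hpot k); pose proof (b_pos (K + k)); lra.
Qed.

Lemma m_bounded_above : exists c, forall k, m k <= c.
Proof.
  destruct n_bounded_below as [c Hc].
  assert (Hdec : forall k, m (S k) + 2 * n k <= m 1%nat + 2 * n 0%nat).
  { induction k as [|k IH]; [lra|].
    pose proof (m_step (S k)); pose proof (n_step k); pose proof (b_pos (S k)).
    lra. }
  exists (m 1%nat + 2 * n 0%nat - 2 * c); intro k.
  pose proof (Hdec k); pose proof (Hc k).
  pose proof (m_step k); pose proof (a_pos k); pose proof (b_pos k); lra.
Qed.

Lemma m_converges : ex_finite_lim_seq m.
Proof.
  destruct m_bounded_above as [c Hc].
  apply ex_finite_lim_seq_incr with c; [|exact Hc].
  intro k; pose proof (m_step k); pose proof (a_pos k); pose proof (b_pos k); lra.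
Qed.

Lemma n_converges : ex_finite_lim_seq n.
Proof.
  destruct n_bounded_below as [c Hc].
  apply ex_finite_lim_seq_decr with c; [|exact Hc].
  intro k; pose proof (n_antitone k 1); rewrite Nat.add_1_r in *; lra.
Qed.

End PositiveHalfLine.

Lemma ABMN_converges_to_plus (a b m n : Z -> R) :
  positive_sol a b -> ABMN a b m n ->
  ex_finite_lim_seq (to_plus m) /\ ex_finite_lim_seq (to_plus n).
Proof.
  intros Hpos Hsol; pose proof (ABMN_increments a b m n Hpos Hsol) as D.
  assert (ZS : forall k, Z.of_nat (S k) = (Z.of_nat k + 1)%Z) by lia.
  assert (Dprev : forall k,
             b (Z.of_nat k + 1)%Z * (m (Z.of_nat k + 1)%Z - m (Z.of_nat k)) =
               a (Z.of_nat k + 1)%Z ^ 2 /\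
             n (Z.of_nat k) - n (Z.of_nat k + 1)%Z =
               a (Z.of_nat k + 1)%Z + 2 * b (Z.of_nat k + 1)%Z).
  { intro k; destruct (D (Z.of_nat k + 1)%Z) as [_ [Hm [Hn _]]].
    replace (Z.of_nat k + 1 - 1)%Z with (Z.of_nat k) in Hm, Hn by lia.
    split; assumption. }
  split; [apply (m_converges (to_plus a) (to_plus b) (to_plus m) (to_plus n))
         | apply (n_converges (to_plus a) (to_plus b) (to_plus m) (to_plus n))];
    intro k; unfold to_plus; rewrite ?ZS;
    solve [apply Hpos | apply D | apply Dprev].
Qed.

Lemma lim_lt_of_increasing (x : Z -> R) (l r : R) :
  (forall i, x i < x (i + 1)%Z) ->
  is_lim_seq (to_minus x) l -> is_lim_seq (to_plus x) r -> l < r.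
Proof.
  intros Hx Hl Hr.
  assert (ZS : forall k, Z.of_nat (S k) = (Z.of_nat k + 1)%Z) by lia.
  assert (Hup : forall k, to_plus x k <= to_plus x (S k)).
  { intro k; unfold to_plus; rewrite ZS; apply Rlt_le, Hx. }
  assert (Hdown : forall k, to_minus x (S k) <= to_minus x k).
  { intro k; unfold to_minus; rewrite ZS.
    pose proof (Hx (- (Z.of_nat k + 1))%Z) as Hk.
    replace (- (Z.of_nat k + 1) + 1)%Z with (- Z.of_nat k)%Z in Hk by lia; lra. }
  pose proof (is_lim_seq_incr_compare _ _ Hr Hup 1%nat).
  pose proof (is_lim_seq_decr_compare _ _ Hl Hdown 0%nat).
  pose proof (Hx 0%Z).
  unfold to_plus, to_minus in *; simpl in *; lra.
Qed.

Theorem mainTheorem1 (a b m n : Z -> R) :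
  positive_sol a b -> ABMN a b m n ->
  strict_sol m n /\
  (exists mL mR nL nR : Rbar,
      is_lim_seq (to_minus m) mL /\ is_lim_seq (to_plus m) mR /\
      is_lim_seq (to_minus n) nL /\ is_lim_seq (to_plus n) nR /\
      Rbar_lt mL mR /\ Rbar_lt nR nL) /\
  (exists mL mR nL nR : R,
      is_lim_seq (to_minus m) mL /\ is_lim_seq (to_plus m) mR /\
      is_lim_seq (to_minus n) nL /\ is_lim_seq (to_plus n) nR /\
      0 < mina_margin mL mR nL nR).
Proof.
  intros Hpos Hsol.
  pose proof (ABMN_strict a b m n Hpos Hsol) as Hstrict.
  destruct (ABMN_converges_to_plus a b m n Hpos Hsol) as [[mR HmR] [nR HnR]].
  destruct (ABMN_reflect a b m n Hpos Hsol) as [Hpos' Hsol'].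
  destruct (ABMN_converges_to_plus _ _ _ _ Hpos' Hsol') as [[nL HnL] [mL HmL]].
  change (is_lim_seq (to_minus n) nL) in HnL.
  change (is_lim_seq (to_minus m) mL) in HmL.
  assert (Hm : mL < mR)
    by (apply (lim_lt_of_increasing m); [apply Hstrict | exact HmL | exact HmR]).
  assert (Hn : - nL < - nR).
  { apply (lim_lt_of_increasing (fun i => - n i)).
    - intro i; destruct (Hstrict i); lra.
    - exact (proj1 (is_lim_seq_opp _ nL) HnL).
    - exact (proj1 (is_lim_seq_opp _ nR) HnR). }
  split; [exact Hstrict | split].
  - exists mL, mR, nL, nR; repeat split; auto; simpl; lra.
  - exists mL, mR, nL, nR; repeat split; auto.
    unfold mina_margin; apply Rdiv_lt_0_compat; lra.
Qed.
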